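(* Let $N\ge1$, $T>0$ and $c\in(0,1]$. Let $\mathcal{A}^\ast=(a_1,a_2,\dots)$ and $\mathcal{B}^\ast=(b_1,b_2,\dots)$ be types (partitions of $N$) such that \[ |a_i-b_i|\le\frac{3N}{T}+\frac{a_i+b_i}{T^c}\quad\text{for all } i. \] Let $\mathcal{A}_0=\mathcal{A}^\ast,\mathcal{A}_1,\dots,\mathcal{A}_L$ be the types produced by the chopping procedure. Then for every $\ell\in[L]$ with $\ell\le(\log_2T)-2$, we have $\|\mathcal{A}_\ell-\mathcal{A}_{\ell-1}\|\le\frac{8N}{T^c}$.
   Context: A type is a list $(a_1,\dots,a_u)$ of positive integers with $a_1\ge\dots\ge a_u$ and $\sum a_i=N$, with the convention $a_i=0$ for $i>u$. A row-array is a list of $2N$ nonnegative integers $(a_1,\dots,a_{2N})$ (not necessarily sorted) with sum $N$; $\operatorname{type}(a_1,\dots,a_{2N})$ is the type obtained by sorting the nonzero entries in descending order. Every type is regarded as a row-array by padding with zeros. For types $\mathcal{A}=(a_i)$, $\mathcal{B}=(b_i)$ define $\|\mathcal{A}-\mathcal{B}\|:=\frac12\sum_{i=1}^N|a_i-b_i|$. Chopping procedure: let $L:=\lceil\log_2N\rceil$ and let $P$ be the least power of $2$ with $P\ge N$. Initialize the row-array $(a_1,\dots,a_{2N})$ to $\mathcal{A}^\ast$ and let $(b_1,\dots,b_{2N})$ be $\mathcal{B}^\ast$ (fixed throughout). For $\ell=1,\dots,L$: for every $i\in[2N]$ such that $a_i-b_i\ge P/2^\ell$ and $a_i>P/2^\ell$,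 set $a_i:=a_i-P/2^\ell$, then find some $j\in[2N]$ with $a_j=b_j=0$ and set $a_j:=P/2^\ell$; after processing all such $i$, set $\mathcal{A}_\ell:=\operatorname{type}(a_1,\dots,a_{2N})$. *)

From Stdlib Require Import Reals.
From mathcomp Require Import all_boot.

Set Implicit Arguments.
Unset Strict Implicit.
Unset Printing Implicit Defensive.

(* A type of N: a (finite) list of positive integers, weakly decreasing,
   with sum N.  Entries beyond the list are read as 0 via [nth 0]. *)
Definition is_type (N : nat) (s : seq nat) : bool :=
  [&& sorted geq s, all (fun x => 0 < x) s & sumn s == N].

Definition type_of (a : seq nat) : seq nat :=
  sort geq (filter (fun x => 0 < x) a).

Definition pad (N : nat) (s : seq nat) : seq nat :=
  s ++ nseq (2 * N - size s) 0.

(* ||A - B|| := 1/2 * sum_{i=1}^N |a_i - b_i|  (0-based indices 0..N-1). *)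
Definition type_dist (N : nat) (A B : seq nat) : R :=
  Rdiv (INR (\sum_(i < N) ((nth 0 A i - nth 0 B i) + (nth 0 B i - nth 0 A i)))) 2.

(* L := ceil(log2 N) (the smallest e with N <= 2^e), P := 2^L is the least
   power of 2 that is >= N; P / 2^l = 2^(L - l) for l <= L. *)
Definition chopL (N : nat) : nat := up_log 2 N.
Definition chopP (N : nat) : nat := 2 ^ chopL N.

(* The choice of j is nondeterministic, hence a relation.
   [pass s b i a a'] : processing indices i.. from array a yields a'. *)
Inductive pass (s : nat) (b : seq nat) : nat -> seq nat -> seq nat -> Prop :=
| pass_end i a : size a <= i -> pass s b i a a
| pass_skip i a a' :
    i < size a ->
    ~~ ((nth 0 b i + s <= nth 0 a i) && (s < nth 0 a i)) ->
    pass s b i.+1 a a' -> pass s b i a a'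
| pass_chop i j a a' :
    i < size a ->
    (nth 0 b i + s <= nth 0 a i) && (s < nth 0 a i) ->
    let a1 := set_nth 0 a i (nth 0 a i - s) in
    j < size a ->
    nth 0 a1 j = 0 -> nth 0 b j = 0 ->
    pass s b i.+1 (set_nth 0 a1 j s) a' -> pass s b i a a'.

(* [arr l] is the row-array after round l of a run of the chopping procedure
   started from A* against B*; A_l := type_of (arr l). *)
Definition chopping_run (N : nat) (Astar Bstar : seq nat) (arr : nat -> seq nat) : Prop :=
  arr 0 = pad N Astar /\
  forall l, 1 <= l <= chopL N ->
    pass (chopP N %/ 2 ^ l) (pad N Bstar) 0 (arr l.-1) (arr l).

From Stdlib Require Import Reals Lia Lra.
From mathcomp Require Import all_boot zify.

Set Implicit Arguments.
Unset Strict Implicit.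
Unset Printing Implicit Defensive.

(* Let s = P/2^l be the chunk size of round l.  Rounds 1..l use chunks of size
   at least s, so they only ever touch the indices with a_i* >= b_i* + s and the
   slots empty in both A* and B*, and on these they preserve the total surplus
   sum (a_i - b_i).  In round l each chop at i moves s <= a_i - b_i units to an
   empty slot, so the row-array moves in l1 by at most twice that surplus, and
   sorting into types does not increase l1 distance.  Since 2^l <= T/4 we have
   s >= 4N/T, and the hypothesis then gives a_i - b_i <= 4 (a_i + b_i) / T^c on
   every index with surplus at least s; summing yields 8N / T^c. *)

Definition absdiff (m n : nat) : nat := (m - n) + (n - m).

Lemma absdiffC m n : absdiff m n = absdiff n m.
Proof. by rewrite /absdiff addnC. Qed.

Lemma absdiffnn n : absdiff n n = 0.
Proof. by rewrite /absdiff subnn. Qed.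

Lemma absdiff_triangle m n p : absdiff m p <= absdiff m n + absdiff n p.
Proof. rewrite /absdiff; lia. Qed.

Lemma absdiff_sum K (f g : nat -> nat) :
  absdiff (\sum_(k < K) f k) (\sum_(k < K) g k) <= \sum_(k < K) absdiff (f k) (g k).
Proof.
elim: K => [|K IH]; first by rewrite !big_ord0.
rewrite !big_ord_recr /=.
have split_add m n m' n' : absdiff (m + n) (m' + n') <= absdiff m m' + absdiff n n'.
  by rewrite /absdiff; lia.
by apply: leq_trans (split_add _ _ _ _) _; rewrite leq_add2r.
Qed.

Definition l1dist (K : nat) (x y : seq nat) : nat :=
  \sum_(i < K) absdiff (nth 0 x i) (nth 0 y i).

Lemma l1distC K x y : l1dist K x y = l1dist K y x.
Proof. by apply: eq_bigr => i _; rewrite absdiffC. Qed.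

Lemma l1distxx K x : l1dist K x x = 0.
Proof. by rewrite /l1dist big1 // => i _; rewrite absdiffnn. Qed.

Lemma l1dist_triangle K x y z : l1dist K x z <= l1dist K x y + l1dist K y z.
Proof. rewrite /l1dist -big_split; apply: leq_sum => i _; exact: absdiff_triangle. Qed.

Lemma sum_set_nth (F : nat -> nat -> nat) (a : seq nat) p v K : p < K ->
  \sum_(i < K) F i (nth 0 (set_nth 0 a p v) i) + F p (nth 0 a p) =
  \sum_(i < K) F i (nth 0 a i) + F p v.
Proof.
move=> ltpK.
rewrite (bigD1 (Ordinal ltpK)) //= [in RHS](bigD1 (Ordinal ltpK)) //= nth_set_nth /= eqxx.
rewrite (eq_bigr (fun i : 'I_K => F i (nth 0 a i))); first by lia.
move=> i neq_ip; rewrite nth_set_nth /= ifN //.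
Qed.

Lemma sum_geq_recl (f : nat -> nat) p K : p < K ->
  \sum_(i < K) (p <= i) * f i = f p + \sum_(i < K) (p < i) * f i.
Proof.
move=> ltpK; rewrite (bigD1 (Ordinal ltpK)) //= [in RHS](bigD1 (Ordinal ltpK)) //=.
rewrite leqnn ltnn mul1n mul0n add0n; congr (_ + _); apply: eq_bigr => i neq_ip.
rewrite leq_eqVlt (_ : (p == i :> nat) = false) //.
by apply/negbTE; apply: contra neq_ip => /eqP eq_pi; apply/eqP/val_inj.
Qed.

Lemma l1dist_set_nth K x p v : p < K ->
  l1dist K x (set_nth 0 x p v) = absdiff (nth 0 x p) v.
Proof.
move=> ltpK; have := sum_set_nth (fun i y => absdiff (nth 0 x i) y) x v ltpK.
by rewrite /= absdiffnn addn0 -/(l1dist K x _) -/(l1dist K x x) l1distxx.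
Qed.

Lemma sum_nth_leq_sumn x K : \sum_(k < K) nth 0 x k <= sumn x.
Proof.
elim: x K => [|z x IH] [|K]; rewrite ?big_ord0 //.
  by rewrite big1 // => k _; rewrite nth_nil.
by rewrite big_ord_recl leq_add2l.
Qed.

Lemma nth_leq_sumn x k : nth 0 x k <= sumn x.
Proof.
elim: x k => [|z x IH] [|k] /=; rewrite ?nth_nil ?leq_addr //.
exact: leq_trans (IH k) (leq_addl _ _).
Qed.

Lemma sum_ord_in_interval u v M : \sum_(t < M) (v <= t < u) = minn u M - minn v M.
Proof.
elim: M => [|M IH]; first by rewrite big_ord0 !minn0.
by rewrite big_ord_recr /= IH; case: (leqP v M); case: (ltnP M u) => /=; lia.
Qed.

Lemma absdiff_layers u v M : u <= M -> v <= M ->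
  absdiff u v = \sum_(t < M) ((t < u) != (t < v)).
Proof.
move=> leuM levM.
rewrite (eq_bigr (fun t : 'I_M => (v <= t < u) + (u <= t < v))); last first.
  by move=> t _; case: (ltnP t u); case: (ltnP t v).
by rewrite big_split /= !sum_ord_in_interval /absdiff; lia.
Qed.

Lemma count_nth (p : pred nat) x K : ~~ p 0 -> size x <= K ->
  count p x = \sum_(k < K) p (nth 0 x k).
Proof.
move=> p0; elim: x K => [|z x IH] K /=.
  by move=> _; rewrite big1 // => k _; rewrite nth_nil (negbTE p0).
by case: K => // K leK; rewrite big_ord_recl /= (IH K leK).
Qed.

Lemma nth_sorted_gt t x i : sorted geq x -> (t < nth 0 x i) = (i < count (leq t.+1) x).
Proof.
elim: x i => [|z x IH] i /=; first by rewrite nth_nil.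
move=> sorted_zx.
have le_z : all (geq z) x.
  by apply: order_path_min sorted_zx => m n p /= lenm lepn; apply: leq_trans lepn lenm.
case: (ltnP t z) => [ltz|lez] /=.
  by case: i => [|i] //=; rewrite IH // (path_sorted sorted_zx).
have -> : count (leq t.+1) x = 0.
  apply/eqP; rewrite -leqn0 leqNgt -has_count; apply/hasPn => y xy.
  by rewrite -leqNgt (leq_trans (allP le_z y xy) lez).
case: i => [|i] /=; first by rewrite ltnNge lez.
case: (ltnP i (size x)) => [ltix|leix]; last by rewrite nth_default.
by rewrite ltnNge (leq_trans (allP le_z _ (mem_nth 0 ltix)) lez).
Qed.

Lemma type_of_sorted x : sorted geq (type_of x).
Proof. by apply: sort_sorted => m n; exact: leq_total. Qed.

Lemma count_gt_type_of t x : count (leq t.+1) (type_of x) = count (leq t.+1) x.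
Proof.
rewrite /type_of count_sort count_filter; apply: eq_count => z /=.
by apply/andb_idr; apply: leq_ltn_trans.
Qed.

Lemma sumn_type_of x : sumn (type_of x) = sumn x.
Proof.
rewrite /type_of (perm_sumn (permEl (perm_sort _ _))).
by elim: x => [|[|z] x IH] //=; rewrite IH.
Qed.

Lemma nth_type_of_leq_sumn x i : nth 0 (type_of x) i <= sumn x.
Proof. by rewrite -sumn_type_of nth_leq_sumn. Qed.

Lemma layer_type_of_le t N K x y : size x <= K -> size y <= K ->
  \sum_(i < N) ((t < nth 0 (type_of x) i) != (t < nth 0 (type_of y) i)) <=
  \sum_(k < K) ((t < nth 0 x k) != (t < nth 0 y k)).
Proof.
move=> lexK leyK; set cx := count (leq t.+1) x; set cy := count (leq t.+1) y.
rewrite (eq_bigr (fun i : 'I_N => (cx <= i < cy) + (cy <= i < cx))); last first.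
  move=> i _; rewrite !nth_sorted_gt ?type_of_sorted // !count_gt_type_of.
  by case: (ltnP i cx); case: (ltnP i cy).
rewrite big_split /= !sum_ord_in_interval.
have := absdiff_sum K (fun k => t < nth 0 x k) (fun k => t < nth 0 y k).
rewrite -!count_nth // -/cx -/cy /absdiff => le_sum.
apply: leq_trans (_ : _ <= (cx - cy) + (cy - cx)) _; first by lia.
apply: leq_trans le_sum (eq_leq _); apply: eq_bigr => k _.
by case: (t < nth 0 x k); case: (t < nth 0 y k).
Qed.

(* Layer-cake: compare the rows threshold by threshold, see [absdiff_layers]. *)
Lemma l1dist_type_of_le N K x y : size x <= K -> size y <= K ->
  \sum_(i < N) absdiff (nth 0 (type_of x) i) (nth 0 (type_of y) i) <= l1dist K x y.
Proof.
move=> lexK leyK; set M := sumn x + sumn y.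
rewrite (eq_bigr (fun i : 'I_N => \sum_(t < M)
    ((t < nth 0 (type_of x) i) != (t < nth 0 (type_of y) i)))); last first.
  move=> i _; apply: absdiff_layers.
    exact: leq_trans (nth_type_of_leq_sumn x i) (leq_addr _ _).
  exact: leq_trans (nth_type_of_leq_sumn y i) (leq_addl _ _).
rewrite /l1dist (eq_bigr (fun k : 'I_K => \sum_(t < M)
    ((t < nth 0 x k) != (t < nth 0 y k)))); last first.
  move=> k _; apply: absdiff_layers.
    exact: leq_trans (nth_leq_sumn x k) (leq_addr _ _).
  exact: leq_trans (nth_leq_sumn y k) (leq_addl _ _).
rewrite exchange_big [X in _ <= X]exchange_big /=.
by apply: leq_sum => t _; exact: layer_type_of_le.
Qed.

Section ChoppingPass.

Variables (s0 : nat) (a0 b : seq nat) (K : nat).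

(* The indices a round with chunk size at least [s0] may ever touch: those
   with a large surplus over [b] in [a0], and the empty slots of [a0] and [b]. *)
Definition movable (i : nat) : bool :=
  (s0 + nth 0 b i <= nth 0 a0 i) || (nth 0 a0 i == 0) && (nth 0 b i == 0).

Definition excess (a : seq nat) : nat :=
  \sum_(i < K) movable i * (nth 0 a i - nth 0 b i).

Definition pass_invariant (a : seq nat) : Prop :=
  [/\ size a = K, forall i, ~~ movable i -> nth 0 a i = nth 0 a0 i
    & excess a = excess a0].

Definition choppable (s x y : nat) : bool := (y + s <= x) && (s < x).

Definition chop_potential (s p : nat) (a : seq nat) : nat :=
  \sum_(i < K) (p <= i) *
    (movable i * (choppable s (nth 0 a i) (nth 0 b i) * (nth 0 a i - nth 0 b i))).

Section OneChop.

Variables (s : nat) (a : seq nat) (p j : nat).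
Hypotheses (le_s0s : s0 <= s) (inv_a : pass_invariant a)
  (chop_p : choppable s (nth 0 a p) (nth 0 b p)).

Let a1 := set_nth 0 a p (nth 0 a p - s).

Hypotheses (a1j0 : nth 0 a1 j = 0) (bj0 : nth 0 b j = 0).

Lemma chop_movable : [/\ movable p, movable j, j != p & nth 0 a j = 0].
Proof.
case: inv_a => _ fixed _; move: chop_p => /andP[lebap ltsap].
have neq_jp : j != p.
  by apply/eqP => eq_jp; move: a1j0; rewrite /a1 eq_jp nth_set_nth /= eqxx; lia.
have aj0 : nth 0 a j = 0 by move: a1j0; rewrite nth_set_nth /= (negbTE neq_jp).
split=> //; apply/negPn/negP => immov; move: (immov); rewrite /movable -fixed //.
  by have -> : s0 + nth 0 b p <= nth 0 a p by lia.
by rewrite aj0 bj0 orbT.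
Qed.

Lemma chop_invariant : p < size a -> j < size a ->
  pass_invariant (set_nth 0 a1 j s).
Proof.
move=> ltp ltj; have [mov_p mov_j neq_jp aj0] := chop_movable.
case: inv_a => sizeK fixed exc; move: chop_p => /andP[lebap ltsap].
rewrite sizeK in ltp ltj.
have exc_p : excess a1 + (nth 0 a p - nth 0 b p) =
    excess a + (nth 0 a p - s - nth 0 b p).
  by have := sum_set_nth (fun i x => movable i * (x - nth 0 b i)) a (nth 0 a p - s) ltp;
    rewrite /= mov_p !mul1n.
have exc_j : excess (set_nth 0 a1 j s) = excess a1 + s.
  by have := sum_set_nth (fun i x => movable i * (x - nth 0 b i)) a1 s ltj;
    rewrite /= mov_j a1j0 bj0 !mul1n !subn0 addn0.
split.
- by rewrite !size_set_nth sizeK; lia.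
- move=> i immov_i; have [neq_ij neq_ip] : i != j /\ i != p.
    by split; apply: contraNneq immov_i => ->.
  by rewrite nth_set_nth /= (negbTE neq_ij) /a1 nth_set_nth /= (negbTE neq_ip) fixed.
- lia.
Qed.

End OneChop.

Lemma excess_le_surplus :
  excess a0 <= \sum_(i < K) (s0 + nth 0 b i <= nth 0 a0 i) * (nth 0 a0 i - nth 0 b i).
Proof.
apply: leq_sum => i _; rewrite /movable.
by case: (s0 + _ <= _) => //=; case: eqP => [->|]; rewrite ?sub0n ?muln0.
Qed.

Lemma pass_preserves_invariant s p a a' : pass s b p a a' -> s0 <= s ->
  pass_invariant a -> pass_invariant a'.
Proof.
elim=> {p a a'} [//|i a a' _ _ _ IH|i j a a' ltia chop_i a1 ltja a1j0 bj0 _ IH]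
  le_s0s inv_a.
  exact: IH.
by apply: IH => //; exact: chop_invariant.
Qed.

Lemma chop_potential_succ_le s p a : chop_potential s p.+1 a <= chop_potential s p a.
Proof.
apply: leq_sum => i _; apply: leq_mul => //.
by case: (ltnP p i) => // lt_pi; rewrite (ltnW lt_pi).
Qed.

Lemma chop_potential_le_excess s a : chop_potential s 0 a <= excess a.
Proof.
apply: leq_sum => i _; rewrite mul1n leq_mul //.
by case: (choppable _ _ _); rewrite ?mul0n ?mul1n.
Qed.

(* A chop at i moves s <= a_i - b_i units from i to an empty slot, an l1 move of
   2s paid for by the term of i in the potential. *)
Lemma pass_l1dist_le s p a a' : pass s b p a a' -> s0 <= s ->
  pass_invariant a -> l1dist K a a' <= 2 * chop_potential s p a.
Proof.
elim=> {p a a'} [i a _|i a a' _ _ _ IH|i j a a' ltia chop_i a1 ltja a1j0 bj0 pass_a2 IH]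
  le_s0s inv_a.
- by rewrite l1distxx.
- by apply: leq_trans (IH le_s0s inv_a) _; rewrite leq_mul2l chop_potential_succ_le orbT.
set a2 := set_nth 0 a1 j s in pass_a2 IH *.
have [mov_i _ _ _] := chop_movable le_s0s inv_a chop_i a1j0 bj0.
have IH2 := IH le_s0s (chop_invariant le_s0s inv_a chop_i a1j0 bj0 ltia ltja).
case: (inv_a) => sizeK _ _; rewrite sizeK in ltia ltja.
move: (chop_i) => /andP[lebai ltsai].
have d1 : l1dist K a a1 = s by rewrite l1dist_set_nth //; rewrite /absdiff; lia.
have d2 : l1dist K a1 a2 = s by rewrite l1dist_set_nth // a1j0 /absdiff sub0n subn0.
have pot1 : chop_potential s i.+1 a1 = chop_potential s i.+1 a.
  have := sum_set_nth (fun k x => (i.+1 <= k) *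
    (movable k * (choppable s x (nth 0 b k) * (x - nth 0 b k)))) a (nth 0 a i - s) ltia.
  by rewrite ltnn !mul0n !addn0.
have pot2 : chop_potential s i.+1 a2 = chop_potential s i.+1 a1.
  have := sum_set_nth (fun k x => (i.+1 <= k) *
    (movable k * (choppable s x (nth 0 b k) * (x - nth 0 b k)))) a1 s ltja.
  by rewrite a1j0 bj0 /choppable ltnn andbF !mul0n !muln0 !addn0.
have pot_i : chop_potential s i a = (nth 0 a i - nth 0 b i) + chop_potential s i.+1 a.
  rewrite /chop_potential (sum_geq_recl (fun k => movable k *
    (choppable s (nth 0 a k) (nth 0 b k) * (nth 0 a k - nth 0 b k)))) //.
  by rewrite mov_i (chop_i : choppable s (nth 0 a i) (nth 0 b i)) !mul1n.
have := l1dist_triangle K a a1 a2; have := l1dist_triangle K a a2 a'.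
by rewrite pot_i; lia.
Qed.

End ChoppingPass.

Lemma pass_size s b p a a' : pass s b p a a' -> size a' = size a.
Proof.
elim=> {p a a'} // i j a a' ltia _ a1 ltja _ _ _ ->.
by rewrite !size_set_nth; lia.
Qed.

Lemma chopping_run_size N Astar Bstar arr l : chopping_run N Astar Bstar arr ->
  l <= chopL N -> size (arr l) = size (arr 0).
Proof.
case=> _ run; elim: l => [//|l IH] lelL.
by rewrite (pass_size (run l.+1 _)) /= ?IH //; lia.
Qed.

Lemma chopping_round_l1dist_le N Astar Bstar arr l : chopping_run N Astar Bstar arr ->
  1 <= l <= chopL N ->
  l1dist (size (arr 0)) (arr l.-1) (arr l) <=
  2 * \sum_(i < size (arr 0)) (chopP N %/ 2 ^ l + nth 0 (pad N Bstar) i <= nth 0 (arr 0) i) *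
        (nth 0 (arr 0) i - nth 0 (pad N Bstar) i).
Proof.
move=> [_ run] /andP[le1l lelL].
set s := chopP N %/ 2 ^ l; set b := pad N Bstar; set a0 := arr 0; set K := size a0.
have le_s_round k : k <= l -> s <= chopP N %/ 2 ^ k.
  by move=> lekl; apply: leq_div2l; rewrite ?expn_gt0 ?leq_pexp2l.
have inv k : k <= l.-1 -> pass_invariant s a0 b K (arr k).
  elim: k => [|k IH] lekl; first by split.
  apply: (pass_preserves_invariant (run k.+1 _)); [lia | apply: le_s_round; lia | ].
  by apply: IH; lia.
apply: leq_trans (pass_l1dist_le (run l _) (leqnn s) (inv _ (leqnn _))) _; first lia.
rewrite leq_mul2l /=.
apply: leq_trans (chop_potential_le_excess _ _ _ _ _ _) _.
by case: (inv _ (leqnn _)) => _ _ ->; exact: excess_le_surplus.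
Qed.

Lemma nth_pad N s i : nth 0 (pad N s) i = nth 0 s i.
Proof.
rewrite /pad nth_cat; case: ltnP => // le_si.
by rewrite nth_nseq if_same nth_default.
Qed.

Lemma sum_nth_pad_leq N A K : is_type N A -> \sum_(i < K) nth 0 (pad N A) i <= N.
Proof.
case/and3P=> _ _ /eqP <-; rewrite (eq_bigr (fun i : 'I_K => nth 0 A i)).
  exact: sum_nth_leq_sumn.
by move=> i _; rewrite nth_pad.
Qed.

Open Scope R_scope.

Lemma INR_leq (m n : nat) : (m <= n)%N -> INR m <= INR n.
Proof. by move/leP; exact: le_INR. Qed.

Lemma INR_expn2 n : INR (2 ^ n)%N = 2 ^ n.
Proof. by elim: n => [//|n IH]; rewrite expnS mult_INR IH /=; lra. Qed.

Lemma type_dist_le_l1dist N K x y : (size x <= K)%N -> (size y <= K)%N ->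
  type_dist N (type_of x) (type_of y) <= INR (l1dist K x y) / 2.
Proof.
move=> lexK leyK; rewrite /type_dist.
by apply: Rmult_le_compat_r; [lra | apply/INR_leq/l1dist_type_of_le].
Qed.

Lemma pow2_mul4_le (l : nat) (T : R) : 0 < T -> INR l <= ln T / ln 2 - 2 -> 2 ^ l * 4 <= T.
Proof.
move=> gt0T le_l.
have gt0ln2 : 0 < ln 2 by have := ln_lt_2; lra.
have le_ln : ln (2 ^ (l + 2)) <= ln T.
  rewrite ln_pow ?plus_INR /=; last lra.
  have -> : ln T = ln T / ln 2 * ln 2 by field; lra.
  by apply: Rmult_le_compat_r; lra.
rewrite (_ : 2 ^ l * 4 = 2 ^ (l + 2)); last by rewrite pow_add /=; ring.
case: (Rle_lt_dec (2 ^ (l + 2)) T) => // ltT.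
by have := ln_increasing _ _ gt0T ltT; lra.
Qed.

Lemma chunk_size_large N l T : (l <= chopL N)%N -> 0 < T -> INR l <= ln T / ln 2 - 2 ->
  4 * INR N <= INR (chopP N %/ 2 ^ l) * T.
Proof.
move=> lelL gt0T le_l; set s := (chopP N %/ 2 ^ l)%N.
have chunks : (s * 2 ^ l)%N = chopP N by rewrite divnK // dvdn_exp2l.
have := INR_leq (@up_logP 2 N isT).
rewrite -/(chopL N) -/(chopP N) -chunks mult_INR INR_expn2.
have := pow2_mul4_le gt0T le_l; have := pos_INR s; nra.
Qed.

(* A surplus of at least [s >= 4N/T] absorbs the additive [3N/T] error term. *)
Lemma surplus_bound (a b s N : nat) (T C : R) : 0 < T -> 0 < C ->
  4 * INR N <= INR s * T ->
  Rabs (INR a - INR b) <= 3 * INR N / T + (INR a + INR b) / C ->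
  INR ((s + b <= a) * (a - b))%N * C <= 4 * INR (a + b).
Proof.
move=> gt0T gt0C large close; rewrite plus_INR.
case: (leqP (s + b) a) => [lesba|_]; last first.
  by rewrite mul0n Rmult_0_l; have := pos_INR a; have := pos_INR b; lra.
rewrite mul1n minus_INR; last by apply/leP; lia.
have le_s : INR s <= INR a - INR b by have := INR_leq lesba; rewrite plus_INR; lra.
have le_diff := Rle_trans _ _ _ (Rle_abs _) close.
have NT : INR N / T * T = INR N by field; lra.
have aC : (INR a + INR b) / C * C = INR a + INR b by field; lra.
have : 4 * (INR N / T) <= INR s by apply: (Rmult_le_reg_r T) => //; nra.
rewrite /Rdiv Rmult_assoc in le_diff; nra.
Qed.

Lemma INR_sum_mul_le (I : Type) (r : seq I) (f g : I -> nat) (C D : R) :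
  (forall i, INR (f i) * C <= D * INR (g i)) ->
  INR (\sum_(i <- r) f i)%N * C <= D * INR (\sum_(i <- r) g i)%N.
Proof.
move=> le_fg; apply: (big_ind2 (fun x y => INR x * C <= D * INR y)) => //.
  by rewrite /=; lra.
move=> x1 x2 y1 y2 le1 le2.
by rewrite !plus_INR Rmult_plus_distr_l Rmult_plus_distr_r; lra.
Qed.

Theorem lemma14 (N : nat) (T c : R) (Astar Bstar : seq nat) (arr : nat -> seq nat) :
  (1 <= N)%N -> 0 < T -> 0 < c <= 1 ->
  is_type N Astar -> is_type N Bstar ->
  (forall i : nat,
     Rabs (INR (nth 0%N Astar i) - INR (nth 0%N Bstar i))
      <= 3 * INR N / T + (INR (nth 0%N Astar i) + INR (nth 0%N Bstar i)) / Rpower T c) ->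
  chopping_run N Astar Bstar arr ->
  forall l : nat, (1 <= l <= chopL N)%N ->
    INR l <= ln T / ln 2 - 2 ->
    type_dist N (type_of (arr l)) (type_of (arr l.-1)) <= 8 * INR N / Rpower T c.
Proof.
move=> _ gt0T _ typeA typeB close run l range_l le_l.
have [arr0 _] := run; move/andP: (range_l) => [_ lelL].
set C := Rpower T c; set K := size (arr 0%N); set s := (chopP N %/ 2 ^ l)%N.
set a := pad N Astar; set b := pad N Bstar.
have gt0C : 0 < C by apply: exp_pos.
have dist_l1 := type_dist_le_l1dist N (eq_leq (chopping_run_size run lelL))
  (eq_leq (chopping_run_size run (leq_trans (leq_pred l) lelL))).
have round := INR_leq (chopping_round_l1dist_le run range_l).
rewrite l1distC -/K -/s -/b arr0 -/a mult_INR in dist_l1 round.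
have surplus :
    INR (\sum_(i < K) (s + nth 0 b i <= nth 0 a i) * (nth 0 a i - nth 0 b i))%N * C <=
    4 * INR (\sum_(i < K) (nth 0 a i + nth 0 b i))%N.
  apply: INR_sum_mul_le => i; apply: surplus_bound (chunk_size_large lelL gt0T le_l) _ => //.
  by rewrite /a /b !nth_pad; exact: close.
have /INR_leq mass : (\sum_(i < K) (nth 0 a i + nth 0 b i) <= 2 * N)%N.
  by rewrite big_split /= mul2n -addnn leq_add // sum_nth_pad_leq.
rewrite mult_INR (_ : INR 2 = 2) in round mass; last by rewrite /=; lra.
have -> : 8 * INR N / C = 8 * INR N * / C by [].
apply: (Rmult_le_reg_r C) => //; rewrite Rmult_assoc Rinv_l; nra.
Qed.
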